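(* Let $n\ge2$, let $W:\{0,1,\dots,n\}\to\mathbb{R}$ be nonnegative, nondecreasing and concave with $W(0)=0$, and let $\rho\ge1$. Define $F:\{1,\dots,n\}\to\mathbb{R}$ by $F(1)=W(1)$ and, for $j=1,\dots,n-1$, $$F(j+1)=\max_{\ell\in\{1,\dots,n\}}\frac{\min\{j,n-\ell\}F(j)-W(j)\rho+W(\ell)}{\min\{\ell,n-j\}}.$$ If $\hat j\in\{1,\dots,n-1\}$ is the smallest index with $F(\hat j+1)>F(\hat j)$, then $F(j+1)>F(j)$ for all $j=\hat j,\dots,n-1$. *)

From mathcomp Require Import all_boot all_order all_algebra.
Set Implicit Arguments. Unset Strict Implicit. Unset Printing Implicit Defensive.
Import Order.TTheory GRing.Theory Num.Theory.
Local Open Scope ring_scope.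

(* W : {0,...,n} -> R, represented as W : nat -> R (values beyond n unused). *)
Definition nonneg_on (R : realFieldType) (n : nat) (W : nat -> R) : Prop :=
  forall i : nat, (i <= n)%N -> 0 <= W i.

Definition nondecr_on (R : realFieldType) (n : nat) (W : nat -> R) : Prop :=
  forall i : nat, (i < n)%N -> W i <= W i.+1.

Definition concave_on (R : realFieldType) (n : nat) (W : nat -> R) : Prop :=
  forall i : nat, (1 <= i)%N -> (i < n)%N -> W i.+1 - W i <= W i - W i.-1.

Definition Fterm (R : realFieldType) (n : nat) (W : nat -> R) (rho : R)
    (Fj : R) (j l : nat) : R :=
  ((minn j (n - l))%:R * Fj - W j * rho + W l) / (minn l (n - j))%:R.

(* F(1) = W(1); F(j+1) = max_{l in 1..n} Fterm ... ; F 0 is an unused dummy *)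
Fixpoint F (R : realFieldType) (n : nat) (W : nat -> R) (rho : R) (k : nat) : R :=
  match k with
  | 0 => 0
  | 1 => W 1%N
  | (j.+1 as k').+1 =>
      let g := Fterm n W rho (F n W rho k') k' in
      \big[Num.max/g 1%N]_(1 <= l < n.+1) g l
  end.

From mathcomp Require Import all_boot all_order all_algebra.
From mathcomp Require Import zify ring lra.
Set Implicit Arguments. Unset Strict Implicit. Unset Printing Implicit Defensive.
Import Order.TTheory GRing.Theory Num.Theory.
Local Open Scope ring_scope.

(* Write x = F j, y = F (j+1) and let l be an index at which the maximum
   defining y is attained.  Two facts about W are used throughout: its
   increments d i = W (i+1) - W i are nonnegative and nonincreasing
   (concavity), which yields chord bounds comparing W k - W i with d i.

   An invariant of the recursion (F_invariant), proved by induction on j,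
   says W l - rho W j <= (l - j) F j for every l > j.  It shows that the
   maximizing index l of an increasing step satisfies l <= j.  For such an l
   the increase x < y forces rho d_j < x (growth_threshold), and evaluating
   the recursion for F (j+2) at the same l then gives y < F (j+2)
   (F_growth_propagates). *)

Section RangeMax.
Variable R : realFieldType.

Lemma range_max_ge (g : nat -> R) (N l : nat) :
  (1 <= l)%N -> (l <= N)%N -> g l <= \big[Num.max/g 1%N]_(1 <= i < N.+1) g i.
Proof. by move=> h1 h2; apply: le_bigmax_seq; rewrite // mem_index_iota; lia. Qed.

(* The maximum is attained, because the default value g 1 is itself a term. *)
Lemma range_max_attained (g : nat -> R) (N : nat) : (1 <= N)%N ->
  exists2 l, (1 <= l <= N)%N & \big[Num.max/g 1%N]_(1 <= i < N.+1) g i = g l.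
Proof.
move=> hN; rewrite big_seq.
apply: (big_ind (fun v => exists2 l, (1 <= l <= N)%N & v = g l)).
- by exists 1%N; rewrite ?hN.
- by move=> _ _ [a ha ->] [b hb ->]; case: leP => _; [exists b | exists a].
- by move=> i; rewrite mem_index_iota => hi; exists i => //; lia.
Qed.

End RangeMax.

Section ConcaveIncrements.
Variables (R : realFieldType) (n : nat) (W : nat -> R).
Hypotheses (hWinc : nondecr_on n W) (hWcc : concave_on n W).

Definition incr (i : nat) : R := W i.+1 - W i.

Lemma incr_ge0 i : (i < n)%N -> 0 <= incr i.
Proof. by move=> hi; rewrite subr_ge0; apply: hWinc. Qed.

Lemma incr_antitone i k : (i <= k)%N -> (k < n)%N -> incr k <= incr i.
Proof.
elim: k => [|k IH] hik hk; first by have -> : i = 0%N by lia.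
have [->|hne] := eqVneq i k.+1; first by [].
apply: le_trans (IH ltac:(lia) ltac:(lia)).
exact: hWcc.
Qed.

Lemma chord_le_left_incr i k : (i <= k)%N -> (k <= n)%N ->
  W k - W i <= (k - i)%:R * incr i.
Proof.
elim: k => [|k IH] hik hk.
  by move: hik; rewrite leqn0 => /eqP ->; rewrite subrr mul0r.
have [->|hne] := eqVneq i k.+1; first by rewrite subrr subnn mul0r.
have h1 := IH ltac:(lia) ltac:(lia).
have h2 := incr_antitone (i := i) (k := k) ltac:(lia) ltac:(lia).
rewrite subSn; last by lia.
rewrite -natr1 /incr in h1 h2 *; lra.
Qed.

Lemma chord_ge_right_incr l j : (l <= j)%N -> (j < n)%N ->
  (j - l)%:R * incr j <= W j - W l.
Proof.
elim: j => [|j IH] hlj hj.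
  by move: hlj; rewrite leqn0 => /eqP ->; rewrite subrr mul0r.
have [->|hne] := eqVneq l j.+1; first by rewrite subrr subnn mul0r.
have h1 := IH ltac:(lia) ltac:(lia).
have h2 := incr_antitone (leqnSn j) hj.
have h3 : (j - l)%:R * incr j.+1 <= (j - l)%:R * incr j :> R.
  by apply: ler_wpM2l.
rewrite subSn; last by lia.
rewrite -natr1 /incr in h1 h2 h3 *; lra.
Qed.

End ConcaveIncrements.

Section Recursion.
Variables (R : realFieldType) (n : nat) (W : nat -> R) (rho : R).
Hypotheses (hW0 : W 0%N = 0) (hWnn : nonneg_on n W).
Hypotheses (hWinc : nondecr_on n W) (hWcc : concave_on n W) (hrho : 1 <= rho).

Local Notation F := (F n W rho).
Local Notation incr := (incr W).

Lemma F_rec j : F j.+2 =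
  \big[Num.max/Fterm n W rho (F j.+1) j.+1 1%N]_(1 <= l < n.+1)
     Fterm n W rho (F j.+1) j.+1 l.
Proof. by []. Qed.

Lemma denom_gt0 j l : (1 <= l)%N -> (j < n)%N -> 0 < (minn l (n - j))%:R :> R.
Proof. by move=> h1 h2; rewrite ltr0n; lia. Qed.

Lemma F_ge_candidate j l : (1 <= j)%N -> (j < n)%N -> (1 <= l <= n)%N ->
  (minn j (n - l))%:R * F j - W j * rho + W l <= F j.+1 * (minn l (n - j))%:R.
Proof.
case: j => [//|j] _ hj /andP[hl1 hl2].
by rewrite -ler_pdivrMr ?denom_gt0 // F_rec; apply: range_max_ge.
Qed.

Lemma F_attained j : (1 <= j)%N -> (j < n)%N -> exists2 l, (1 <= l <= n)%N &
  (minn j (n - l))%:R * F j - W j * rho + W l = F j.+1 * (minn l (n - j))%:R.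
Proof.
case: j => [//|j] _ hj.
have [l hl e] := @range_max_attained R (Fterm n W rho (F j.+1) j.+1) n ltac:(lia).
exists l => //; rewrite F_rec e /Fterm mulfVK // lt0r_neq0 // denom_gt0 //.
by case/andP: hl.
Qed.

Lemma W_shift j l : (j <= l)%N -> (l < n)%N ->
  W l.+1 - W j.+1 * rho <= W l - W j * rho.
Proof.
move=> hjl hl.
have h1 := incr_antitone hWcc hjl hl.
have h2 := incr_ge0 hWinc (leq_ltn_trans hjl hl).
have h3 : incr j <= incr j * rho by rewrite ler_peMr.
rewrite /incr in h1 h2 h3; lra.
Qed.

Lemma F_invariant j : (1 <= j <= n)%N -> forall l, (j < l <= n)%N ->
  W l - W j * rho <= (l - j)%:R * F j.
Proof.
elim: j => [//|[|j] IH] /andP[_ hj] l /andP[hjl hl].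
  have h := chord_le_left_incr hWcc (leq0n l) hl.
  have hW1 := hWnn hj.
  have hl1 : (l%:R : R) = (l - 1)%:R + 1 by rewrite natr1 subn1 prednK // ltnW.
  have hW1rho : W 1 <= W 1 * rho by rewrite ler_peMr.
  rewrite /incr hW0 subr0 subn0 hl1 /= in h *; lra.
set x := F j.+1; set y := F j.+2.
have hcand := F_ge_candidate (l := l.-1) (isT : (1 <= j.+1)%N) ltac:(lia) ltac:(lia).
have hIH := IH ltac:(lia) l.-1 ltac:(lia).
have hshift := W_shift (j := j.+1) (l := l.-1) ltac:(lia) ltac:(lia).
have em : minn l.-1 (n - j.+1) = (minn j.+1 (n - l.-1) + (l.-1 - j.+1))%N by lia.
rewrite em natrD -/x -/y in hcand; rewrite -/x in hIH.
rewrite (_ : l - j.+2 = l.-1 - j.+1)%N; last by lia.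
rewrite (_ : l.-1.+1 = l) in hshift; last by lia.
set a := (minn j.+1 (n - l.-1))%:R : R in hcand.
set k := (l.-1 - j.+1)%:R : R in hcand hIH *.
have [ha hk] : 0 <= a /\ 0 <= k by split; apply: ler0n.
have [hxy|hxy] := leP x y.
  have : k * x <= k * y by apply: ler_wpM2l.
  lra.
have : a * y <= a * x by apply: ler_wpM2l => //; apply: ltW.
lra.
Qed.

Section IncreasingStep.
Variables (j l : nat).
Hypotheses (hj1 : (1 <= j)%N) (hjn : (j < n)%N) (hl1 : (1 <= l)%N) (hln : (l <= n)%N).
Hypothesis hxy : F j < F j.+1.
Hypothesis hmax :
  (minn j (n - l))%:R * F j - W j * rho + W l = F j.+1 * (minn l (n - j))%:R.

(* By the invariant, an increasing step is realized at some l <= j. *)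
Lemma argmax_left : (l <= j)%N.
Proof.
rewrite leqNgt; apply/negP => hjl.
have hI := F_invariant (j := j) ltac:(lia) (l := l) ltac:(lia).
have em : minn l (n - j) = (minn j (n - l) + (l - j))%N by lia.
have hgap : 0 < F j.+1 - F j by rewrite subr_gt0.
have hpos := mulr_gt0 (denom_gt0 (j := j) hl1 hjn) hgap.
move: hmax hpos; rewrite em natrD => hmax' hpos.
have ha : 0 <= (minn j (n - l))%:R :> R by apply: ler0n.
lra.
Qed.

Lemma growth_threshold : rho * incr j < F j.
Proof.
have hlj := argmax_left.
move: hxy hmax; set x := F j; set y := F j.+1.
set A := (minn j (n - l))%:R : R; set M := (minn l (n - j))%:R : R.
set K := (j - l)%:R : R => hxy' hmax'.
have hM : 0 < M := denom_gt0 hl1 hjn.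
have hMA : M <= A by rewrite ler_nat; lia.
have hAK : A <= M + K by rewrite -natrD ler_nat; lia.
have hLB : K * incr j <= W j - W l := chord_ge_right_incr hWcc hlj hjn.
have hWl := hWnn hln.
have hd := incr_ge0 hWinc hjn.
have hMy : M * x < M * y by rewrite ltr_pM2l.
have hupper : W j * rho - W l < (A - M) * x by lra.
have hlower : K * (rho * incr j) <= W j * rho - W l.
  have r1 : 0 <= (rho - 1) * W l by rewrite mulr_ge0 // subr_ge0.
  have r2 : rho * (K * incr j) <= rho * (W j - W l).
    by rewrite ler_pM2l ?(lt_le_trans ltr01).
  lra.
rewrite ltNge; apply/negP => hxP.
have r1 : 0 <= (A - M) * (rho * incr j - x) by rewrite mulr_ge0 // subr_ge0.
have hP : 0 <= rho * incr j := mulr_ge0 (le_trans ler01 hrho) hd.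
have r2 : 0 <= (M + K - A) * (rho * incr j) by rewrite mulr_ge0 // subr_ge0.
lra.
Qed.

(* Evaluating the recursion for F (j+2) at the same l shows F (j+1) < F (j+2). *)
Lemma F_growth_propagates : (j.+1 < n)%N -> F j.+1 < F j.+2.
Proof.
move=> hj2.
have hP := growth_threshold.
(* lra only consults the local context, so the section hypotheses are copied *)
have hgrow := hxy; have hrec := hmax.
have hcand := F_ge_candidate (j := j.+1) (l := l) isT hj2 ltac:(lia).
have hM2 := denom_gt0 (j := j.+1) hl1 hj2.
have eid : (minn j.+1 (n - l))%:R + (minn l (n - j))%:R
         = (minn j (n - l))%:R + (minn l (n - j.+1))%:R + 1 :> R.
  by rewrite -!natrD natr1; congr _%:R; lia.
have eW : W j.+1 * rho = W j * rho + rho * incr j by rewrite /incr; ring.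
have hA : 0 <= (minn j (n - l))%:R * (F j.+1 - F j) :> R.
  by apply: mulr_ge0; rewrite ?ler0n // subr_ge0 ltW.
have eidy := congr1 ( *%R^~ (F j.+1)) eid.
rewrite -(ltr_pM2r hM2); lra.
Qed.

End IncreasingStep.

Lemma F_increase_step j : (1 <= j)%N -> (j.+2 <= n)%N ->
  F j < F j.+1 -> F j.+1 < F j.+2.
Proof.
move=> hj1 hj2 hxy.
have [l /andP[hl1 hln] hmax] := F_attained hj1 (ltnW hj2).
exact: F_growth_propagates hj1 (ltnW hj2) hl1 hln hxy hmax hj2.
Qed.

End Recursion.

Theorem lemma3 (R : realFieldType) (n : nat) (W : nat -> R) (rho : R)
  (hn : (2 <= n)%N)
  (hW0 : W 0%N = 0)
  (hWnn : nonneg_on n W) (hWinc : nondecr_on n W) (hWcc : concave_on n W)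
  (hrho : 1 <= rho)
  (jh : nat) (hjh1 : (1 <= jh)%N) (hjh2 : (jh <= n - 1)%N)
  (hjh_inc : F n W rho jh < F n W rho jh.+1)
  (hjh_min : forall j : nat, (1 <= j)%N -> (j < jh)%N -> F n W rho j.+1 <= F n W rho j) :
  forall j : nat, (jh <= j)%N -> (j <= n - 1)%N -> F n W rho j < F n W rho j.+1.
Proof.
elim=> [|j IH] hjhj hjn; first by lia.
have [<-|hne] := eqVneq jh j.+1; first exact: hjh_inc.
apply: F_increase_step => //; [lia | lia | apply: IH; lia].
Qed.
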